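(* Let $R$ be a ring, $I$ an ideal of $R$, and $A$ an $R$-algebra which is $I$-adically complete and separated with $A/I^nA$ smooth over $R/I^n$ for all $n\ge1$. Let $\alpha\in A$ be $I$-adically nilpotent, let $T_1,\dots,T_d\in A$ be such that $d(T_i\bmod IA)$ form a basis of $\Omega_{(A/IA)/(R/I)}$, and let $a_1,\dots,a_d\in A$. Then there exists a unique $\alpha$-derivation $\partial$ of $A$ over $R$ with $\partial(T_i)=a_i$ for all $i$.
   Context: An $\alpha$-derivation of an $R$-algebra $A$ over $R$ ($\alpha\in A$) is an $R$-linear map $\partial:A\to A$ with $\partial(1)=0$ and $\partial(xy)=\partial(x)y+x\partial(y)+\alpha\partial(x)\partial(y)$ for all $x,y$. *)

From HB Require Import structures.
From mathcomp Require Import all_boot all_algebra.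
From mathcomp Require Import mpoly.
Set Implicit Arguments. Unset Strict Implicit. Unset Printing Implicit Defensive.
Import GRing.Theory.
Local Open Scope ring_scope.

Definition is_ideal (T : comPzRingType) (S : T -> Prop) : Prop :=
  S 0 /\ (forall x y, S x -> S y -> S (x + y)) /\ (forall r x, S x -> S (r * x)).

Section Defs.
Variables (R : comNzRingType) (A : comPzRingType) (f : {rmorphism R -> A}).

Definition ideal_pow (I : R -> Prop) (n : nat) (x : R) : Prop :=
  exists (m : nat) (c : 'I_m -> R) (g : 'I_m -> 'I_n -> R),
    (forall k j, I (g k j)) /\ x = \sum_(k < m) c k * \prod_(j < n) g k j.

Definition ext_pow (I : R -> Prop) (n : nat) (x : A) : Prop :=
  exists (m : nat) (a : 'I_m -> A) (g : 'I_m -> 'I_n -> R),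
    (forall k j, I (g k j)) /\ x = \sum_(k < m) f (\prod_(j < n) g k j) * a k.

Definition adic_separated (I : R -> Prop) : Prop :=
  forall x : A, (forall n, ext_pow I n x) -> x = 0.

(* I-adically complete: every I-adic Cauchy sequence converges
   (i.e. A -> lim A/I^nA is surjective). *)
Definition adic_complete (I : R -> Prop) : Prop :=
  forall u : nat -> A, (forall n, ext_pow I n (u n.+1 - u n)) ->
    exists x : A, forall n, ext_pow I n (x - u n).

Definition adic_nilpotent (I : R -> Prop) (alpha : A) : Prop :=
  forall n, exists m, ext_pow I n (alpha ^+ m).

(* Evaluation of p in R[X_0..X_{n-1}] at x : 'I_n -> A through f
   (this is mpoly's [mmap f x p], written for a possibly trivial ring A). *)
Definition ev (n : nat) (x : 'I_n -> A) (p : {mpoly R[n]}) : A :=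
  \sum_(m <- msupp p) f p@_m * \prod_(i < n) x i ^+ m i.

(* Below, K is an ideal of R and J an ideal of A containing f(K)A;
   the statements concern the (R/K)-algebra A/J. *)

(* A/J is formally smooth over R/K: for every (R/K)-algebra C (i.e. an
   R-algebra fC : R -> C killing K) and square-zero ideal N of C, every
   (R/K)-algebra map A/J -> C/N lifts to an (R/K)-algebra map A/J -> C.
   Maps A/J -> C/N are represented by set-theoretic lifts g : A -> C that
   are algebra morphisms modulo N and send J into N. *)
Definition formally_smooth_quot (K : R -> Prop) (J : A -> Prop) : Prop :=
  forall (C : comPzRingType) (fC : {rmorphism R -> C}) (N : C -> Prop),
    (forall r, K r -> fC r = 0) -> is_ideal N ->
    (forall x y, N x -> N y -> x * y = 0) ->
    forall g : A -> C,
      (forall x, J x -> N (g x)) ->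
      (forall x y, N (g (x + y) - (g x + g y))) ->
      (forall x y, N (g (x * y) - g x * g y)) ->
      (forall r, N (g (f r) - fC r)) ->
      exists h : A -> C,
        [/\ forall x y, h (x + y) = h x + h y,
            forall x y, h (x * y) = h x * h y,
            forall r, h (f r) = fC r,
            forall x, J x -> h x = 0
          & forall x, N (h x - g x)].

(* A/J is of finite presentation over R/K: there are x_1..x_n in A
   generating A/J as an (R/K)-algebra, such that the kernel of
   (R/K)[X_1..X_n] -> A/J is finitely generated, i.e. the kernel of
   R[X] -> A/J is K R[X] + (q_1,...,q_m). *)
Definition fin_pres_quot (K : R -> Prop) (J : A -> Prop) : Prop :=
  exists (n : nat) (x : 'I_n -> A),
    (forall a : A, exists p : {mpoly R[n]}, J (a - ev x p)) /\
    exists (m : nat) (q : 'I_m -> {mpoly R[n]}),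
      (forall j, J (ev x (q j))) /\
      forall p : {mpoly R[n]}, J (ev x p) ->
        exists c : 'I_m -> {mpoly R[n]},
          forall mo, K (p - \sum_(j < m) c j * q j)@_mo.

Definition smooth_quot (K : R -> Prop) (J : A -> Prop) : Prop :=
  formally_smooth_quot K J /\ fin_pres_quot K J.

(* D : A -> M is (the pull-back of) an (R/I)-derivation of A/IA into the
   (A/IA)-module M. *)
Definition is_der (I : R -> Prop) (M : lmodType A) (D : A -> M) : Prop :=
  [/\ forall x y, D (x + y) = D x + D y,
      forall r x, D (f r * x) = f r *: D x,
      forall x y, D (x * y) = x *: D y + y *: D x
    & forall x, ext_pow I 1 x -> D x = 0].

(* d(T_i mod IA) form a basis of Omega_{(A/IA)/(R/I)}, expressed through the
   defining universal property of Omega (Hom(Omega, M) = Der(A/IA, M)):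
   for every (A/IA)-module M and m_1..m_d in M there is a unique
   (R/I)-derivation D : A/IA -> M with D(T_i) = m_i. *)
Definition kahler_basis (I : R -> Prop) (d : nat) (T : 'I_d -> A) : Prop :=
  forall (M : lmodType A),
    (forall (x : A) (v : M), ext_pow I 1 x -> x *: v = 0) ->
    forall mm : 'I_d -> M,
      exists D : A -> M,
        [/\ is_der I D, forall i, D (T i) = mm i
          & forall D' : A -> M, is_der I D' -> (forall i, D' (T i) = mm i) ->
              forall x, D' x = D x].

Definition alpha_derivation (alpha : A) (dd : A -> A) : Prop :=
  [/\ forall x y, dd (x + y) = dd x + dd y,
      forall r x, dd (f r * x) = f r * dd x,
      dd 1 = 0
    & forall x y, dd (x * y) = dd x * y + x * dd y + alpha * dd x * dd y].

End Defs.

From HB Require Import structures.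
From mathcomp Require Import all_boot all_algebra.
From mathcomp Require Import mpoly.
From mathcomp Require Import boolp ring.
Set Implicit Arguments. Unset Strict Implicit. Unset Printing Implicit Defensive.
Import GRing.Theory.
Local Open Scope ring_scope.

(* An alpha-derivation is a ring map x |-> x + dd(x) e into A[e]/(e^2 - alpha e).
   We build solutions modulo I^n A by induction on n, refining each step through
   the ideals (alpha^k I^n + I^(n+1)) A, k <= m, where alpha^m lies in IA.  For two
   consecutive ones S, Z (Z inside S), alpha S and I S lie in Z, so S e is a square-zero
   ideal of A[e]/(e^2 - alpha e) modulo I^(n+1) A + Z e, and S/Z is an A/IA-module.
   Formal smoothness of A/I^(n+1) A lifts a solution modulo S to an alpha-derivation
   modulo Z; the difference of two such is an (R/I)-derivation into S/Z, so by the
   basis property of the d(T_i) the values on the T_i can be corrected, and are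
   then determined, modulo Z.  The solutions modulo I^n A thus form a Cauchy
   sequence, whose limit is the unique solution by completeness and separatedness. *)

Section IdealTheory.
Variables (V : comPzRingType) (J : V -> Prop) (hJ : is_ideal J).

Lemma is_ideal0 : J 0. Proof. by case: hJ. Qed.
Lemma is_idealD x y : J x -> J y -> J (x + y). Proof. by case: hJ => _ [JD _]; apply: JD. Qed.
Lemma is_idealMl r x : J x -> J (r * x). Proof. by case: hJ => _ [_ JM]; apply: JM. Qed.
Lemma is_idealMr r x : J x -> J (x * r). Proof. by rewrite mulrC; apply: is_idealMl. Qed.
Lemma is_idealN x : J x -> J (- x). Proof. by rewrite -mulN1r; apply: is_idealMl. Qed.
Lemma is_idealB x y : J x -> J y -> J (x - y).
Proof. by move=> Jx Jy; apply: is_idealD => //; apply: is_idealN. Qed.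
Lemma is_ideal_sum m (F : 'I_m -> V) : (forall i, J (F i)) -> J (\sum_(i < m) F i).
Proof. by move=> JF; elim/big_ind: _ => //; [exact: is_ideal0 | exact: is_idealD]. Qed.
End IdealTheory.

Record ideal_pair (V : comPzRingType) (S Z : V -> Prop) : Prop := IdealPair {
  ideal_pair_S : is_ideal S;
  ideal_pair_Z : is_ideal Z;
  ideal_pair_sub : forall x, Z x -> S x }.

Definition coset (V : zmodType) (Z : V -> Prop) (v : V) : V -> Prop :=
  fun w => Z (w - v).

(* S/Z, encoded as the set of cosets of Z meeting S. *)
Definition quot (V : comPzRingType) (S Z : V -> Prop) (h : ideal_pair S Z) :=
  {X : V -> Prop | exists2 v, S v & X = coset Z v}.

HB.instance Definition _ V S Z h := gen_eqMixin (@quot V S Z h).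
HB.instance Definition _ V S Z h := gen_choiceMixin (@quot V S Z h).

Section Quotient.
Variables (V : comPzRingType) (S Z : V -> Prop) (h : ideal_pair S Z).
Local Notation Q := (quot h).
Let hS := ideal_pair_S h.
Let hZ := ideal_pair_Z h.

(* Elements outside [S] are sent to the class of [0]. *)
Definition qpi (v : V) : Q :=
  match pselect (S v) with
  | left Sv => exist _ (coset Z v) (ex_intro2 _ _ v Sv erefl)
  | right _ => exist _ (coset Z 0) (ex_intro2 _ _ 0 (is_ideal0 hS) erefl)
  end.

Definition qrep (q : Q) : V := sval (cid2 (svalP q)).

Lemma qrepS q : S (qrep q).
Proof. by rewrite /qrep; case: cid2. Qed.

Lemma qrepK : cancel qrep qpi.
Proof.
move=> q; rewrite /qrep /qpi; case: cid2 => v Sv e /=.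
case: pselect => // Sv'; case: q e => X HX /= e; exact: eq_exist.
Qed.

Lemma qpiP q : exists2 v, S v & q = qpi v.
Proof. by exists (qrep q); [exact: qrepS | rewrite qrepK]. Qed.

Lemma eq_qpi v w : S v -> S w -> (qpi v = qpi w) <-> Z (v - w).
Proof.
move=> Sv Sw; rewrite /qpi; case: pselect => // Sv'; case: pselect => // Sw'.
split => [/(congr1 sval) /= e | Zvw].
  have Zvv : coset Z v v by rewrite /coset subrr; exact: is_ideal0.
  by rewrite e in Zvv.
apply: eq_exist; apply: funext => u; apply: propext; rewrite /coset.
split => Zu.
- by rewrite (_ : u - w = (u - v) + (v - w)); [apply: is_idealD | ring].
- by rewrite (_ : u - v = (u - w) - (v - w)); [apply: is_idealB | ring].
Qed.

Lemma qrep_qpi v : S v -> Z (qrep (qpi v) - v).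
Proof. by move=> Sv; apply/(eq_qpi (qrepS _) Sv); rewrite qrepK. Qed.

Definition qadd (p q : Q) : Q := qpi (qrep p + qrep q).
Definition qopp (p : Q) : Q := qpi (- qrep p).
Definition qscale (a : V) (p : Q) : Q := qpi (a * qrep p).

Lemma qadd_qpi v w : S v -> S w -> qadd (qpi v) (qpi w) = qpi (v + w).
Proof.
move=> Sv Sw; apply/eq_qpi; [by apply: (is_idealD hS); exact: qrepS | exact: is_idealD |].
rewrite (_ : _ - _ = (qrep (qpi v) - v) + (qrep (qpi w) - w)); last by ring.
by apply: (is_idealD hZ); exact: qrep_qpi.
Qed.

Lemma qopp_qpi v : S v -> qopp (qpi v) = qpi (- v).
Proof.
move=> Sv; apply/eq_qpi; [by apply: (is_idealN hS); exact: qrepS | exact: is_idealN |].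
by rewrite -opprD; apply: (is_idealN hZ); exact: qrep_qpi.
Qed.

Lemma qscale_qpi a v : S v -> qscale a (qpi v) = qpi (a * v).
Proof.
move=> Sv; apply/eq_qpi; [by apply: (is_idealMl hS); exact: qrepS | exact: is_idealMl |].
by rewrite -mulrBr; apply: (is_idealMl hZ); exact: qrep_qpi.
Qed.

Lemma qaddA : associative qadd.
Proof.
move=> p q r; case: (qpiP p) => u Su ->; case: (qpiP q) => v Sv ->.
case: (qpiP r) => w Sw ->.
by rewrite !qadd_qpi ?addrA //; apply: (is_idealD hS).
Qed.

Lemma qaddC : commutative qadd.
Proof.
move=> p q; case: (qpiP p) => u Su ->; case: (qpiP q) => v Sv ->.
by rewrite !qadd_qpi // addrC.
Qed.

Lemma qadd0 : left_id (qpi 0) qadd.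
Proof.
by move=> p; case: (qpiP p) => u Su ->; rewrite qadd_qpi ?add0r //; exact: (is_ideal0 hS).
Qed.

Lemma qaddN : left_inverse (qpi 0) qopp qadd.
Proof.
move=> p; case: (qpiP p) => u Su ->.
by rewrite qopp_qpi // qadd_qpi ?addNr //; apply: (is_idealN hS).
Qed.

HB.instance Definition _ := GRing.isZmodule.Build Q qaddA qaddC qadd0 qaddN.

Lemma qscaleA a b p : qscale a (qscale b p) = qscale (a * b) p.
Proof.
by case: (qpiP p) => u Su ->; rewrite !qscale_qpi ?mulrA //; apply: (is_idealMl hS).
Qed.

Lemma qscale1 : left_id 1 qscale.
Proof. by move=> p; case: (qpiP p) => u Su ->; rewrite qscale_qpi ?mul1r. Qed.

Lemma qscaleDr : right_distributive qscale +%R.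
Proof.
move=> a p q; case: (qpiP p) => u Su ->; case: (qpiP q) => v Sv ->.
have Sau := is_idealMl hS a Su; have Sav := is_idealMl hS a Sv.
have -> : qpi u + qpi v = qpi (u + v) := qadd_qpi Su Sv.
rewrite !qscale_qpi ?mulrDr //; last exact: (is_idealD hS).
exact: esym (qadd_qpi Sau Sav).
Qed.

Lemma qscaleDl p : {morph qscale^~ p : a b / a + b}.
Proof.
case: (qpiP p) => u Su -> a b.
rewrite !qscale_qpi // mulrDl.
by apply: esym; apply: qadd_qpi; apply: (is_idealMl hS).
Qed.

HB.instance Definition _ :=
  GRing.Zmodule_isLmodule.Build V Q qscaleA qscale1 qscaleDr qscaleDl.

Lemma qpi0 : qpi 0 = 0. Proof. by []. Qed.

Lemma qpiD v w : S v -> S w -> qpi (v + w) = qpi v + qpi w.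
Proof. by move=> Sv Sw; rewrite -qadd_qpi. Qed.

Lemma qpiB v w : S v -> S w -> qpi (v - w) = qpi v - qpi w.
Proof.
move=> Sv Sw; have -> : - qpi w = qpi (- w) := qopp_qpi Sw.
by rewrite -qpiD //; apply: (is_idealN hS).
Qed.

Lemma qpiZ a v : S v -> qpi (a * v) = a *: qpi v.
Proof. by move=> Sv; rewrite -qscale_qpi. Qed.

Lemma qpi_eq0 v : S v -> qpi v = 0 <-> Z v.
Proof. by move=> Sv; rewrite -qpi0 eq_qpi ?subr0 //; exact: (is_ideal0 hS). Qed.

Lemma qrep0 : Z (qrep 0).
Proof. by have := qrep_qpi (is_ideal0 hS); rewrite subr0. Qed.

Lemma qrepD p q : Z (qrep (p + q) - (qrep p + qrep q)).
Proof.
rewrite -{1}(qrepK p) -{1}(qrepK q) -qpiD; try exact: qrepS.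
by apply: qrep_qpi; apply: (is_idealD hS); exact: qrepS.
Qed.

Lemma qrepZ a p : Z (qrep (a *: p) - a * qrep p).
Proof.
rewrite -{1}(qrepK p) -qpiZ; last exact: qrepS.
by apply: qrep_qpi; apply: (is_idealMl hS); exact: qrepS.
Qed.
End Quotient.

Section RingQuotient.
Variables (V : comPzRingType) (Z : V -> Prop) (hZ : is_ideal Z).

Lemma total_ideal : is_ideal (fun _ : V => True).
Proof. by []. Qed.

Definition total_pair := IdealPair total_ideal hZ (fun _ _ => Logic.I).
Definition ring_quot := quot total_pair.
HB.instance Definition _ := GRing.Zmodule.on ring_quot.

Definition rpi (v : V) : ring_quot := qpi total_pair v.
Definition rrep (p : ring_quot) : V := qrep (h := total_pair) p.

Lemma rpiP p : exists v, p = rpi v.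
Proof. by case: (qpiP (h := total_pair) p) => v _ ->; exists v. Qed.

Lemma eq_rpi v w : rpi v = rpi w <-> Z (v - w). Proof. exact: (eq_qpi total_pair). Qed.

Lemma rpiD v w : rpi (v + w) = rpi v + rpi w. Proof. exact: (qpiD total_pair). Qed.
Lemma rpiB v w : rpi (v - w) = rpi v - rpi w. Proof. exact: (qpiB total_pair). Qed.
Lemma rpi_eq0 v : rpi v = 0 <-> Z v. Proof. exact: (qpi_eq0 total_pair). Qed.

Definition rmul (p q : ring_quot) : ring_quot := rpi (rrep p * rrep q).

Lemma rmul_rpi v w : rmul (rpi v) (rpi w) = rpi (v * w).
Proof.
apply/eq_rpi; set v' := rrep (rpi v); set w' := rrep (rpi w).
rewrite (_ : _ - _ = v' * (w' - w) + w * (v' - v)); last by ring.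
by apply: (is_idealD hZ); apply: (is_idealMl hZ); exact: qrep_qpi.
Qed.

Lemma rmulA : associative rmul.
Proof.
move=> p q r; case: (rpiP p) => u ->; case: (rpiP q) => v ->; case: (rpiP r) => w ->.
by rewrite !rmul_rpi mulrA.
Qed.

Lemma rmulC : commutative rmul.
Proof. by move=> p q; case: (rpiP p) => u ->; case: (rpiP q) => v ->; rewrite !rmul_rpi mulrC. Qed.

Lemma rmul1 : left_id (rpi 1) rmul.
Proof. by move=> p; case: (rpiP p) => u ->; rewrite rmul_rpi mul1r. Qed.

Lemma rmulDl : left_distributive rmul +%R.
Proof.
move=> p q r; case: (rpiP p) => u ->; case: (rpiP q) => v ->; case: (rpiP r) => w ->.
by rewrite -rpiD !rmul_rpi -rpiD mulrDl.
Qed.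

HB.instance Definition _ := GRing.Zmodule_isComPzRing.Build ring_quot rmulA rmulC rmul1 rmulDl.

Lemma rpiM v w : rpi (v * w) = rpi v * rpi w. Proof. by rewrite -rmul_rpi. Qed.

Lemma rpi_is_zmod_morphism : GRing.zmod_morphism rpi. Proof. exact: rpiB. Qed.
Lemma rpi_is_monoid_morphism : GRing.monoid_morphism rpi.
Proof. by split => // v w; rewrite rpiM. Qed.
HB.instance Definition _ := GRing.isZmodMorphism.Build V ring_quot rpi rpi_is_zmod_morphism.
HB.instance Definition _ :=
  GRing.isMonoidMorphism.Build V ring_quot rpi rpi_is_monoid_morphism.
End RingQuotient.

(* A[e]/(e^2 - alpha e), with (x, y) standing for x + y e. *)
Definition twisted_dual (A : comPzRingType) (alpha : A) := (A * A)%type.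
HB.instance Definition _ A alpha := GRing.Zmodule.on (@twisted_dual A alpha).

Section TwistedDual.
Variables (A : comPzRingType) (alpha : A).
Local Notation D := (twisted_dual alpha).

Lemma tdaddE (u v : D) : u + v = (u.1 + v.1, u.2 + v.2). Proof. by []. Qed.
Lemma tdoppE (u : D) : - u = (- u.1, - u.2). Proof. by []. Qed.

Definition tdmul (u v : D) : D :=
  (u.1 * v.1, u.1 * v.2 + u.2 * v.1 + alpha * u.2 * v.2).

Lemma tdmulA : associative tdmul.
Proof. by move=> [a b] [c d] [e g]; rewrite /tdmul /=; congr pair; ring. Qed.
Lemma tdmulC : commutative tdmul.
Proof. by move=> [a b] [c d]; rewrite /tdmul /=; congr pair; ring. Qed.
Lemma tdmul1 : left_id ((1, 0) : D) tdmul.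
Proof. by move=> [a b]; rewrite /tdmul /=; congr pair; ring. Qed.
Lemma tdmulDl : left_distributive tdmul +%R.
Proof.
by move=> [a b] [c d] [e g]; rewrite /tdmul !tdaddE /=; congr pair; ring.
Qed.

HB.instance Definition _ := GRing.Zmodule_isComPzRing.Build D tdmulA tdmulC tdmul1 tdmulDl.

Lemma tdmulE (u v : D) :
  u * v = (u.1 * v.1, u.1 * v.2 + u.2 * v.1 + alpha * u.2 * v.2).
Proof. by []. Qed.

Variables (R : comPzRingType) (f : {rmorphism R -> A}).
Definition tdconst (r : R) : D := (f r, 0).

Lemma tdconst_is_zmod_morphism : GRing.zmod_morphism tdconst.
Proof. by move=> r s; rewrite /tdconst rmorphB; congr pair; rewrite subr0. Qed.
Lemma tdconst_is_monoid_morphism : GRing.monoid_morphism tdconst.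
Proof.
split => [|r s]; first by rewrite /tdconst rmorph1.
by rewrite /tdconst tdmulE /= rmorphM; congr pair; ring.
Qed.
HB.instance Definition _ := GRing.isZmodMorphism.Build R D tdconst tdconst_is_zmod_morphism.
HB.instance Definition _ :=
  GRing.isMonoidMorphism.Build R D tdconst tdconst_is_monoid_morphism.
End TwistedDual.

Section ExtendedPowers.
Variables (R : comNzRingType) (A : comPzRingType) (f : {rmorphism R -> A}).
Variable I : R -> Prop.
Local Notation P := (ext_pow f I).

Lemma ext_pow_ideal n : is_ideal (P n).
Proof.
split; first by exists 0%N, (fun _ => 0), (fun _ _ => 0); split=> [[] | ]; rewrite ?big_ord0.
split=> [x y [m1 [a1 [g1 [Ig1 ->]]]] [m2 [a2 [g2 [Ig2 ->]]]] | c x [m [b [g [Ig ->]]]]].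
  pose glue T (u : 'I_m1 -> T) (v : 'I_m2 -> T) k :=
    match split k with inl i => u i | inr i => v i end.
  exists (m1 + m2)%N, (glue _ a1 a2), (glue _ g1 g2); split.
    by move=> k j; rewrite /glue; case: (split k).
  by rewrite big_split_ord /glue; congr (_ + _); apply: eq_bigr => i _;
    rewrite ?(unsplitK (inl i)) ?(unsplitK (inr i)).
exists m, (fun k => c * b k), g; split => //.
by rewrite mulr_sumr; apply: eq_bigr => k _; ring.
Qed.

Lemma ext_pow0 x : P 0 x.
Proof.
exists 1%N, (fun _ => x), (fun _ _ => 0); split; first by move=> ? [].
by rewrite big_ord1 big_ord0 rmorph1 mul1r.
Qed.

Lemma ext_powS n x : P n.+1 x -> P n x.
Proof.
move=> [m [b [g [Ig ->]]]].
exists m, (fun k => f (g k ord_max) * b k), (fun k j => g k (widen_ord (leqnSn n) j)).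
split => //; apply: eq_bigr => k _.
by rewrite big_ord_recr rmorphM mulrA.
Qed.

Lemma ext_pow_mulI n r x : I r -> P n x -> P n.+1 (f r * x).
Proof.
move=> Ir [m [b [g [Ig ->]]]].
exists m, b, (fun k j => if unlift ord_max j is Some j' then g k j' else r); split.
  by move=> k j; case: (unlift ord_max j).
rewrite mulr_sumr; apply: eq_bigr => k _.
rewrite big_ord_recr unlift_none rmorphM mulrA [f r * _]mulrC.
congr (f _ * _ * _); apply: eq_bigr => j _.
have -> : widen_ord (leqnSn n) j = lift ord_max j.
  by apply: val_inj; rewrite /= /bump leqNgt ltn_ord.
by rewrite liftK.
Qed.

Lemma ext_pow1_mul n u x : P 1 u -> P n x -> P n.+1 (u * x).
Proof.
move=> [m [b [g [Ig ->]]]] Px; rewrite mulr_suml.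
apply: (is_ideal_sum (ext_pow_ideal _)) => k.
rewrite big_ord1 (_ : _ * b k * x = b k * (f (g k ord0) * x)); last by ring.
by apply: (is_idealMl (ext_pow_ideal _)); apply: ext_pow_mulI.
Qed.

Lemma ext_pow_prod n (g : 'I_n -> R) : (forall j, I (g j)) -> P n (f (\prod_(j < n) g j)).
Proof. by exists 1%N, (fun _ => 1), (fun _ => g); rewrite big_ord1 mulr1. Qed.

Lemma ext_pow_ideal_pow n r : ideal_pow I n r -> P n (f r).
Proof.
move=> [m [c [g [Ig ->]]]]; rewrite rmorph_sum.
apply: (is_ideal_sum (ext_pow_ideal _)) => k.
by rewrite rmorphM; apply: (is_idealMl (ext_pow_ideal _)); apply: ext_pow_prod.
Qed.
End ExtendedPowers.

Section DerivationsModulo.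
Variables (R : comNzRingType) (A : comPzRingType) (f : {rmorphism R -> A}).
Variables (I : R -> Prop) (alpha : A).
Local Notation P := (ext_pow f I).

Definition alpha_der_mod (G : A -> Prop) (dd : A -> A) : Prop :=
  [/\ forall x y, G (dd (x + y) - (dd x + dd y)),
      forall x y, G (dd (x * y) - (dd x * y + x * dd y + alpha * dd x * dd y))
    & forall r, G (dd (f r))].

Lemma sub_alpha_der_mod (G G' : A -> Prop) dd :
  (forall x, G x -> G' x) -> alpha_der_mod G dd -> alpha_der_mod G' dd.
Proof. by move=> GG' [D1 D2 D3]; split => *; apply: GG'. Qed.

Lemma alpha_derivation_mod (G : A -> Prop) dd :
  is_ideal G -> alpha_derivation f alpha dd -> alpha_der_mod G dd.
Proof.
move=> hG [Dadd Dlin D1 Dmul]; have G0 := is_ideal0 hG.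
split=> [x y | x y | r]; first by rewrite Dadd subrr.
  by rewrite Dmul subrr.
by rewrite -[f r]mulr1 Dlin D1 mulr0.
Qed.

Section Ideal.
Variables (G : A -> Prop) (hG : is_ideal G) (dd : A -> A) (hdd : alpha_der_mod G dd).

Lemma alpha_der_mod_fmul r y : G (dd (f r * y) - f r * dd y).
Proof.
case: hdd => _ Dmul Df; move: (Df r); set u := dd (f r) => Gu.
rewrite (_ : _ - _ = (dd (f r * y) - (u * y + f r * dd y + alpha * u * dd y))
                     + (u * y + alpha * dd y * u)); last by ring.
apply: (is_idealD hG); first exact: Dmul.
by apply: (is_idealD hG); [apply: (is_idealMr hG) | apply: (is_idealMl hG)].
Qed.

Lemma alpha_der_mod_sum m (r : 'I_m -> R) (b : 'I_m -> A) :
  G (dd (\sum_(k < m) f (r k) * b k) - \sum_(k < m) f (r k) * dd (b k)).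
Proof.
case: hdd => Dadd _ _; elim: m r b => [|m IH] r b.
  rewrite !big_ord0 subr0 (_ : dd 0 = - (dd (0 + 0) - (dd 0 + dd 0))); last by rewrite add0r; ring.
  exact: (is_idealN hG).
rewrite !big_ord_recr /=.
set s := \sum_(i < m) _; set s' := \sum_(i < m) _; set y := f _ * b _.
rewrite (_ : _ - _ = (dd (s + y) - (dd s + dd y)) + (dd s - s')
                     + (dd y - f (r ord_max) * dd (b ord_max))); last by ring.
apply: (is_idealD hG); last exact: alpha_der_mod_fmul.
by apply: (is_idealD hG) => //; apply: IH.
Qed.

Lemma alpha_der_mod_ext_pow N x : (forall y, P N y -> G y) -> P N x -> G (dd x).
Proof.
move=> PG [m [b [g [Ig ->]]]].
have Dsum := alpha_der_mod_sum (fun k => \prod_(j < N) g k j) b.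
set z := \sum_(k < m) _ in Dsum *; set s := \sum_(k < m) _ in Dsum.
rewrite (_ : dd z = (dd z - s) + s); last by ring.
apply: (is_idealD hG) => //; apply: PG; apply: (is_ideal_sum (ext_pow_ideal f I N)) => k.
by apply: (is_idealMr (ext_pow_ideal f I N)); apply: ext_pow_prod.
Qed.

Lemma alpha_der_mod_perturb dd' :
  (forall x, G (dd' x - dd x)) -> alpha_der_mod G dd'.
Proof.
move=> Gdd'; case: hdd => Dadd Dmul Df.
have [e Ge ->] : exists2 e, (forall x, G (e x)) & dd' = fun x => dd x + e x.
  by exists (fun x => dd' x - dd x) => //; apply: funext => x; rewrite addrC subrK.
split=> [x y | x y | r].
- rewrite (_ : _ - _ = (dd (x + y) - (dd x + dd y)) + (e (x + y) - e x - e y)); last by ring.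
  by apply: (is_idealD hG) => //; do 2 apply: (is_idealB hG) => //.
- rewrite (_ : _ - _ = (dd (x * y) - (dd x * y + x * dd y + alpha * dd x * dd y)) + e (x * y)
     - (e x * (y + alpha * dd y + alpha * e y) + e y * (x + alpha * dd x))); last by ring.
  apply: (is_idealB hG); first exact: (is_idealD hG).
  by apply: (is_idealD hG); apply: (is_idealMr hG).
- exact: (is_idealD hG).
Qed.
End Ideal.

Lemma alpha_derivation_of_mod_ext_pow dd :
  adic_separated f I -> (forall n, alpha_der_mod (P n) dd) ->
  alpha_derivation f alpha dd.
Proof.
move=> hsep hdd.
have eq_sep u v : (forall n, P n (u - v)) -> u = v.
  by move=> /hsep /eqP; rewrite subr_eq0 => /eqP.
have Df r : dd (f r) = 0 by apply: hsep => n; case: (hdd n).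
have Dmul x y : dd (x * y) = dd x * y + x * dd y + alpha * dd x * dd y.
  by apply: eq_sep => n; case: (hdd n).
split=> // [x y | r x | ]; last by rewrite -(rmorph1 f) Df.
  by apply: eq_sep => n; case: (hdd n).
by rewrite Dmul Df; ring.
Qed.

Lemma is_der_f_eq0 (M : lmodType A) (D : A -> M) r : is_der f I D -> D (f r) = 0.
Proof.
move=> [_ Dlin Dmul _]; have D1 : D 1 = 0.
  have := Dmul 1 1; rewrite mul1r scale1r => D11.
  by apply: (@addrI _ (D 1)); rewrite addr0 -D11.
by rewrite -[f r]mulr1 Dlin D1 scaler0.
Qed.
End DerivationsModulo.

Section GradedPiece.
Variables (R : comNzRingType) (A : comPzRingType) (f : {rmorphism R -> A}).
Variables (I : R -> Prop) (alpha : A).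
Variables (S Z : A -> Prop) (hSZ : ideal_pair S Z).
Hypothesis alphaSZ : forall x, S x -> Z (alpha * x).
Hypothesis ext_pow1SZ : forall u x, ext_pow f I 1 u -> S x -> Z (u * x).
Local Notation M := (quot hSZ).
Let hS := ideal_pair_S hSZ.
Let hZ := ideal_pair_Z hSZ.

Lemma quot_ext_pow1_scale u (v : M) : ext_pow f I 1 u -> u *: v = 0.
Proof.
move=> Pu; case: (qpiP v) => w Sw ->.
by rewrite -qpiZ //; apply/qpi_eq0; [exact: (is_idealMl hS) | exact: ext_pow1SZ].
Qed.

Lemma is_der_quot_sub dd1 dd2 :
  alpha_der_mod f alpha Z dd1 -> alpha_der_mod f alpha Z dd2 ->
  (forall x, S (dd2 x - dd1 x)) -> is_der f I (fun x => qpi hSZ (dd2 x - dd1 x)).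
Proof.
move=> hdd1 hdd2 Se; have [D1add D1mul _] := hdd1; have [D2add D2mul _] := hdd2.
split=> [x y | r x | x y | x [m [b [g [Ig ->]]]]].
- rewrite -qpiD //; apply/eq_qpi; [exact: Se | exact: (is_idealD hS) |].
  rewrite (_ : _ - _ = (dd2 (x + y) - (dd2 x + dd2 y)) - (dd1 (x + y) - (dd1 x + dd1 y)));
    [exact: (is_idealB hZ) | ring].
- rewrite -qpiZ //; apply/eq_qpi; [exact: Se | exact: (is_idealMl hS) |].
  rewrite (_ : _ - _ = (dd2 (f r * x) - f r * dd2 x) - (dd1 (f r * x) - f r * dd1 x)); last by ring.
  by apply: (is_idealB hZ); [exact: (alpha_der_mod_fmul hZ hdd2) |
    exact: (alpha_der_mod_fmul hZ hdd1)].
- rewrite -!qpiZ // -qpiD; try exact: (is_idealMl hS).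
  apply/eq_qpi; [exact: Se | by apply: (is_idealD hS); exact: (is_idealMl hS) |].
  rewrite (_ : _ - _ =
      (dd2 (x * y) - (dd2 x * y + x * dd2 y + alpha * dd2 x * dd2 y))
    - (dd1 (x * y) - (dd1 x * y + x * dd1 y + alpha * dd1 x * dd1 y))
    + alpha * ((dd2 x - dd1 x) * dd2 y + dd1 x * (dd2 y - dd1 y))); last by ring.
  apply: (is_idealD hZ); first exact: (is_idealB hZ).
  by apply: alphaSZ; apply: (is_idealD hS); [apply: (is_idealMr hS) | apply: (is_idealMl hS)].
- apply/qpi_eq0; first exact: Se.
  have Dsum1 := alpha_der_mod_sum hZ hdd1 (fun k => \prod_(j < 1) g k j) b.
  have Dsum2 := alpha_der_mod_sum hZ hdd2 (fun k => \prod_(j < 1) g k j) b.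
  set z := \sum_(k < m) _ in Dsum1 Dsum2 *.
  set s1 := \sum_(k < m) _ in Dsum1; set s2 := \sum_(k < m) _ in Dsum2.
  rewrite (_ : _ - _ = (dd2 z - s2) - (dd1 z - s1) + (s2 - s1)); last by ring.
  apply: (is_idealD hZ); first exact: (is_idealB hZ).
  rewrite /s1 /s2 -sumrB; apply: (is_ideal_sum hZ) => k.
  by rewrite -mulrBr; apply: ext_pow1SZ; [exact: ext_pow_prod | exact: Se].
Qed.

Lemma alpha_der_mod_add_der dd (D : A -> M) :
  alpha_der_mod f alpha Z dd -> is_der f I D ->
  alpha_der_mod f alpha Z (fun x => dd x + qrep (D x)).
Proof.
move=> [Dadd Dmul Df] hD; have [Eadd _ Emul _] := hD.
split=> [x y | x y | r].
- rewrite Eadd (_ : _ - _ = (dd (x + y) - (dd x + dd y))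
                          + (qrep (D x + D y) - (qrep (D x) + qrep (D y)))); last by ring.
  by apply: (is_idealD hZ) => //; exact: qrepD.
- rewrite Emul; set ex := qrep (D x); set ey := qrep (D y).
  have [Sx Sy] : S ex /\ S ey by split; exact: qrepS.
  rewrite (_ : _ - _ = (dd (x * y) - (dd x * y + x * dd y + alpha * dd x * dd y))
     + (qrep (x *: D y + y *: D x) - (qrep (x *: D y) + qrep (y *: D x)))
     + (qrep (x *: D y) - x * ey) + (qrep (y *: D x) - y * ex)
     - alpha * (dd x * ey + ex * dd y + ex * ey)); last by ring.
  apply: (is_idealB hZ).
    apply: (is_idealD hZ); last exact: qrepZ.
    apply: (is_idealD hZ); last exact: qrepZ.
    by apply: (is_idealD hZ) => //; exact: qrepD.
  apply: alphaSZ; apply: (is_idealD hS); first apply: (is_idealD hS).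
  + exact: (is_idealMl hS).
  + exact: (is_idealMr hS).
  + exact: (is_idealMl hS).
- by rewrite (is_der_f_eq0 r hD); apply: (is_idealD hZ) => //; exact: qrep0.
Qed.

Variables (d : nat) (T : 'I_d -> A) (hT : kahler_basis f I T).

Lemma alpha_der_mod_unique_on_basis dd1 dd2 :
  alpha_der_mod f alpha Z dd1 -> alpha_der_mod f alpha Z dd2 ->
  (forall i, Z (dd2 (T i) - dd1 (T i))) ->
  (forall x, S (dd2 x - dd1 x)) -> forall x, Z (dd2 x - dd1 x).
Proof.
move=> hdd1 hdd2 ZT Se x.
have hD := is_der_quot_sub hdd1 hdd2 Se.
have hD0 : is_der f I (fun _ : A => 0 : M).
  by split=> *; rewrite ?addr0 ?scaler0 ?addr0.
have [D0 [_ _ D0_uniq]] := hT quot_ext_pow1_scale (fun _ => 0).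
have DT i : qpi hSZ (dd2 (T i) - dd1 (T i)) = 0 by apply/qpi_eq0.
apply/(qpi_eq0 hSZ (Se x)).
by rewrite (D0_uniq _ hD DT) -(D0_uniq _ hD0 (fun _ => erefl)).
Qed.

Lemma alpha_der_mod_adjust_on_basis dd (a : 'I_d -> A) :
  alpha_der_mod f alpha Z dd -> (forall i, S (a i - dd (T i))) ->
  exists dd', alpha_der_mod f alpha Z dd' /\ forall i, Z (dd' (T i) - a i).
Proof.
move=> hdd Sa.
have [D [hD DT _]] := hT quot_ext_pow1_scale (fun i => qpi hSZ (a i - dd (T i))).
exists (fun x => dd x + qrep (D x)); split; first exact: alpha_der_mod_add_der.
move=> i; rewrite DT (_ : _ - _ = qrep (qpi hSZ (a i - dd (T i))) - (a i - dd (T i))).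
  exact: qrep_qpi.
by ring.
Qed.
End GradedPiece.

Lemma twisted_dual_ideal (A : comPzRingType) (alpha : A) (J Z : A -> Prop) :
  is_ideal J -> is_ideal Z -> (forall x, J x -> Z x) ->
  is_ideal (fun u : twisted_dual alpha => J u.1 /\ Z u.2).
Proof.
move=> hJ hZ JZ; split; first by split; [exact: is_ideal0 hJ | exact: is_ideal0 hZ].
split=> [u v [Ju1 Zu2] [Jv1 Zv2] | v u [Ju1 Zu2]].
  by split; [exact: (is_idealD hJ) | exact: (is_idealD hZ)].
rewrite tdmulE; split=> /=; first exact: (is_idealMl hJ).
apply: (is_idealD hZ); first apply: (is_idealD hZ).
- exact: (is_idealMl hZ).
- by apply: (is_idealMl hZ); apply: JZ.
- exact: (is_idealMl hZ).
Qed.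

Section SmoothLift.
Variables (R : comNzRingType) (A : comPzRingType) (f : {rmorphism R -> A}).
Variables (I : R -> Prop) (alpha : A).
Variables (S Z : A -> Prop) (hSZ : ideal_pair S Z).
Hypothesis alphaSZ : forall x, S x -> Z (alpha * x).
Variable N : nat.
Hypothesis ext_powZ : forall x, ext_pow f I N x -> Z x.
Local Notation P := (ext_pow f I N).
Let hS := ideal_pair_S hSZ.
Let hZ := ideal_pair_Z hSZ.

Let hPZ := twisted_dual_ideal alpha (ext_pow_ideal f I N) hZ ext_powZ.
Local Notation C := (ring_quot hPZ).
Local Notation pi := (rpi hPZ).

Definition sq_zero_ideal (c : C) : Prop := exists2 e, S e & c = pi (0, e).

Lemma sq_zero_idealP : is_ideal sq_zero_ideal.
Proof.
split.
  exists 0; first exact: is_ideal0 hS.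
  by apply/esym/rpi_eq0; split; [exact: is_ideal0 (ext_pow_ideal f I N) | exact: is_ideal0 hZ].
split=> [_ _ [e Se ->] [e' Se' ->] | c _ [e Se ->]].
  by exists (e + e'); [exact: (is_idealD hS) | rewrite -rpiD tdaddE /= add0r].
case: (rpiP c) => v ->; exists (v.1 * e + alpha * v.2 * e).
  by apply: (is_idealD hS); apply: (is_idealMl hS).
by rewrite -rpiM tdmulE /=; congr (pi (_, _)); ring.
Qed.

Lemma sq_zero_ideal_mul c c' : sq_zero_ideal c -> sq_zero_ideal c' -> c * c' = 0.
Proof.
move=> [e Se ->] [e' Se' ->]; rewrite -rpiM; apply/rpi_eq0; rewrite tdmulE /=.
split; first by rewrite mul0r; exact: is_ideal0 (ext_pow_ideal f I N).
by rewrite !(mul0r, mulr0, add0r) -mulrA; apply: alphaSZ; exact: (is_idealMr hS).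
Qed.

Hypothesis hfs : formally_smooth_quot f (ideal_pow I N) P.

Lemma alpha_der_mod_smooth_lift dd :
  alpha_der_mod f alpha S dd ->
  exists2 dd', alpha_der_mod f alpha Z dd' & forall x, S (dd' x - dd x).
Proof.
move=> hdd; have [Dadd Dmul Df] := hdd.
pose fC : {rmorphism R -> C} := pi \o tdconst alpha f.
pose g x := pi (x, dd x).
have sqN u : u.1 = 0 -> S u.2 -> sq_zero_ideal (pi u).
  by case: u => u1 u2 /= -> Su2; exists u2.
have fCK r : ideal_pow I N r -> fC r = 0.
  by move=> Ir; apply/rpi_eq0; split; [exact: ext_pow_ideal_pow | exact: is_ideal0 hZ].
have gP x : P x -> sq_zero_ideal (g x).
  move=> Px; exists (dd x).
    exact: (alpha_der_mod_ext_pow hS hdd (fun y Py => ideal_pair_sub hSZ (ext_powZ Py)) Px).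
  apply/eq_rpi; rewrite tdaddE tdoppE /= subr0 subrr.
  by split; [| exact: is_ideal0 hZ].
have gD x y : sq_zero_ideal (g (x + y) - (g x + g y)).
  rewrite /g -(rpiD hPZ (x, dd x)) -rpiB; apply: sqN; last exact: Dadd.
  by rewrite !tdaddE tdoppE /= subrr.
have gM x y : sq_zero_ideal (g (x * y) - g x * g y).
  rewrite /g -rpiM -rpiB; apply: sqN; rewrite tdaddE tdoppE tdmulE /= ?subrr //.
  by rewrite (_ : _ - _ = dd (x * y) - (dd x * y + x * dd y + alpha * dd x * dd y)); last ring.
have gf r : sq_zero_ideal (g (f r) - fC r).
  by rewrite /g -rpiB; apply: sqN; rewrite tdaddE tdoppE /= ?subrr ?subr0.
have [h [hD hM hf _ hg]] :=
  hfs fCK sq_zero_idealP sq_zero_ideal_mul gP gD gM gf.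
have /choice [e he] : forall x, exists e, S e /\ h x - g x = pi (0, e).
  by move=> x; case: (hg x) => e; exists e.
have hE x : h x = pi (x, dd x + e x).
  by rewrite -[h x](subrK (g x)) (proj2 (he x)) /g -rpiD tdaddE /= add0r addrC.
exists (fun x => dd x + e x); last by move=> x; rewrite addrC addKr; exact: (proj1 (he x)).
split=> [x y | x y | r].
- by move: (hD x y); rewrite !hE -rpiD => /eq_rpi [].
- move: (hM x y); rewrite !hE -rpiM => /eq_rpi [_]; rewrite tdaddE tdoppE tdmulE /=.
  by rewrite (_ : _ - _ = dd (x * y) + e (x * y) - ((dd x + e x) * y + x * (dd y + e y)
                         + alpha * (dd x + e x) * (dd y + e y))); last ring.
- by move: (hf r); rewrite hE => /eq_rpi []; rewrite /= subr0.
Qed.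
End SmoothLift.

Section Filtration.
Variables (R : comNzRingType) (A : comPzRingType) (f : {rmorphism R -> A}).
Variables (I : R -> Prop) (alpha : A).
Local Notation P := (ext_pow f I).

Definition alpha_filtration n k (x : A) : Prop :=
  exists p q, [/\ P n p, P n.+1 q & x = alpha ^+ k * p + q].

Local Notation F := alpha_filtration.
Let hP n := ext_pow_ideal f I n.

Lemma alpha_filtration_ideal n k : is_ideal (F n k).
Proof.
split.
  by exists 0, 0; split; [exact: (is_ideal0 (hP n)) | exact: (is_ideal0 (hP n.+1)) | ring].
split=> [_ _ [p [q [Pp Pq ->]]] [p' [q' [Pp' Pq' ->]]] | r _ [p [q [Pp Pq ->]]]].
  exists (p + p'), (q + q').
  by split; [exact: (is_idealD (hP n) Pp Pp') | exact: (is_idealD (hP n.+1) Pq Pq') | ring].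
exists (r * p), (r * q).
by split; [exact: (is_idealMl (hP n) r Pp) | exact: (is_idealMl (hP n.+1) r Pq) | ring].
Qed.

Lemma ext_pow_filtration0 n x : P n x -> F n 0 x.
Proof. by move=> Px; exists x, 0; split; [| exact: (is_ideal0 (hP _)) | ring]. Qed.

Lemma ext_powS_filtration n k x : P n.+1 x -> F n k x.
Proof. by move=> Px; exists 0, x; split; [exact: (is_ideal0 (hP _)) | | ring]. Qed.

Lemma alpha_filtrationS n k x : F n k.+1 x -> F n k x.
Proof.
move=> [p [q [Pp Pq ->]]]; exists (alpha * p), q.
by split; [exact: (is_idealMl (hP n) _ Pp) | | rewrite exprS; ring].
Qed.

Lemma alpha_filtration_mul_alpha n k x : F n k x -> F n k.+1 (alpha * x).
Proof.
move=> [p [q [Pp Pq ->]]]; exists p, (alpha * q).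
by split; [| apply: (is_idealMl (hP _)) | rewrite exprS; ring].
Qed.

Lemma alpha_filtration_mul_ext_pow1 n k u x : P 1 u -> F n k x -> F n k.+1 (u * x).
Proof.
move=> Pu [p [q [Pp Pq ->]]]; apply: ext_powS_filtration.
rewrite mulrDr mulrCA; apply: (is_idealD (hP _)).
  by apply: (is_idealMl (hP _)); exact: ext_pow1_mul.
exact: (is_idealMl (hP _)).
Qed.

Lemma alpha_filtration_ext_powS n m x : P 1 (alpha ^+ m) -> F n m x -> P n.+1 x.
Proof.
move=> Pm [p [q [Pp Pq ->]]]; apply: (is_idealD (hP _)) => //.
exact: ext_pow1_mul.
Qed.

Definition alpha_filtration_pair n k : ideal_pair (F n k) (F n k.+1) :=
  IdealPair (alpha_filtration_ideal n k) (alpha_filtration_ideal n k.+1)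
    (@alpha_filtrationS n k).
End Filtration.

Section Solutions.
Variables (R : comNzRingType) (A : comPzRingType) (f : {rmorphism R -> A}).
Variables (I : R -> Prop) (alpha : A).
Variables (d : nat) (T : 'I_d -> A) (a : 'I_d -> A).
Local Notation P := (ext_pow f I).
Local Notation F := (alpha_filtration f I alpha).

Definition solution_mod (G : A -> Prop) (dd : A -> A) : Prop :=
  alpha_der_mod f alpha G dd /\ forall i, G (dd (T i) - a i).

Lemma sub_solution_mod (G G' : A -> Prop) dd :
  (forall x, G x -> G' x) -> solution_mod G dd -> solution_mod G' dd.
Proof. by move=> GG' [hdd ddT]; split => [|i]; [exact: sub_alpha_der_mod hdd | exact: GG']. Qed.

Lemma solution_mod_perturb (G : A -> Prop) dd dd' :
  is_ideal G -> solution_mod G dd -> (forall x, G (dd' x - dd x)) -> solution_mod G dd'.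
Proof.
move=> hG [hdd ddT] Gdd'; split=> [|i]; first exact: alpha_der_mod_perturb Gdd'.
by rewrite (_ : _ - _ = (dd' (T i) - dd (T i)) + (dd (T i) - a i)); [exact: is_idealD | ring].
Qed.

Lemma solution_mod_of_solution (G : A -> Prop) dd :
  is_ideal G -> alpha_derivation f alpha dd -> (forall i, dd (T i) = a i) ->
  solution_mod G dd.
Proof.
move=> hG hdd ddT; split=> [|i]; first exact: alpha_derivation_mod.
by rewrite ddT subrr; exact: is_ideal0.
Qed.

Lemma solution_of_solution_mod_ext_pow dd :
  adic_separated f I -> (forall n, solution_mod (P n) dd) ->
  alpha_derivation f alpha dd /\ forall i, dd (T i) = a i.
Proof.
move=> hsep hdd; split; first by apply: (alpha_derivation_of_mod_ext_pow hsep) => n; case: (hdd n).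
by move=> i; apply/eqP; rewrite -subr_eq0; apply/eqP; apply: hsep => n; case: (hdd n).
Qed.

Variable (hT : kahler_basis f I T).
Variables (m : nat) (hm : P 1 (alpha ^+ m)).

Lemma solution_mod_lift n dd :
  formally_smooth_quot f (ideal_pow I n.+1) (P n.+1) ->
  solution_mod (P n) dd -> exists dd', solution_mod (P n.+1) dd'.
Proof.
move=> hfs hdd; suff [dd' hdd'] : exists dd', solution_mod (F n m) dd'.
  by exists dd'; apply: sub_solution_mod hdd' => x; exact: alpha_filtration_ext_powS.
elim: m => [|k [dd1 [hdd1 dd1T]]].
  by exists dd; apply: sub_solution_mod hdd => x; exact: ext_pow_filtration0.
have hSZ := alpha_filtration_pair f I alpha n k.
have [dd2 hdd2 Sdd2] := alpha_der_mod_smooth_lift hSZ (alpha_filtration_mul_alpha (k := k))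
  (ext_powS_filtration alpha k.+1) hfs hdd1.
have Sa i : F n k (a i - dd2 (T i)).
  rewrite (_ : _ - _ = - ((dd2 (T i) - dd1 (T i)) + (dd1 (T i) - a i))); last by ring.
  have hF := alpha_filtration_ideal f I alpha n k.
  by apply: (is_idealN hF); apply: (is_idealD hF).
have [dd' [hdd' dd'T]] := alpha_der_mod_adjust_on_basis hSZ
  (alpha_filtration_mul_alpha (k := k)) (alpha_filtration_mul_ext_pow1 (k := k)) hT hdd2 Sa.
by exists dd'.
Qed.

Lemma solution_mod_unique n dd1 dd2 :
  solution_mod (P n) dd1 -> solution_mod (P n) dd2 -> forall x, P n (dd2 x - dd1 x).
Proof.
elim: n dd1 dd2 => [|n IHn] dd1 dd2 hdd1 hdd2 x; first exact: ext_pow0.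
have [[hd1 d1T] [hd2 d2T]] := (hdd1, hdd2).
suff Fk k : forall y, F n k (dd2 y - dd1 y) by exact: alpha_filtration_ext_powS (Fk m x).
elim: k => [|k IHk] y.
  have down dd : solution_mod (P n.+1) dd -> solution_mod (P n) dd.
    by apply: sub_solution_mod; exact: ext_powS.
  exact/ext_pow_filtration0/(IHn _ _ (down _ hdd1) (down _ hdd2)).
have lift_der dd : alpha_der_mod f alpha (P n.+1) dd -> alpha_der_mod f alpha (F n k.+1) dd.
  by apply: sub_alpha_der_mod; exact: ext_powS_filtration.
apply: (alpha_der_mod_unique_on_basis (alpha_filtration_pair f I alpha n k)
  (alpha_filtration_mul_alpha (k := k)) (alpha_filtration_mul_ext_pow1 (k := k)) hT
  (lift_der _ hd1) (lift_der _ hd2)) => // i.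
apply: ext_powS_filtration.
rewrite (_ : _ - _ = (dd2 (T i) - a i) - (dd1 (T i) - a i)); last by ring.
exact: (is_idealB (ext_pow_ideal f I _)).
Qed.
End Solutions.

Theorem proposition5p13 (R : comNzRingType) (A : comPzRingType)
    (f : {rmorphism R -> A}) (I : R -> Prop) (hI : is_ideal I)
    (hsep : adic_separated f I) (hcomp : adic_complete f I)
    (hsm : forall n : nat, (1 <= n)%N -> smooth_quot f (ideal_pow I n) (ext_pow f I n))
    (alpha : A) (halpha : adic_nilpotent f I alpha)
    (d : nat) (T : 'I_d -> A) (hT : kahler_basis f I T) (a : 'I_d -> A) :
  exists dd : A -> A,
    [/\ alpha_derivation f alpha dd,
        forall i, dd (T i) = a i
      & forall dd' : A -> A, alpha_derivation f alpha dd' ->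
          (forall i, dd' (T i) = a i) -> forall x, dd' x = dd x].
Proof.
have hfs n : formally_smooth_quot f (ideal_pow I n.+1) (ext_pow f I n.+1).
  by case: (hsm n.+1 isT).
have [m hm] := halpha 1%N.
have /choice [dn hdn] : forall n, exists dd, solution_mod f alpha T a (ext_pow f I n) dd.
  elim=> [|n [dd hdd]]; first by exists (fun=> 0); split; [split|] => *; exact: ext_pow0.
  exact: (solution_mod_lift hT hm (hfs n) hdd).
have /choice [dd hdd] : forall x, exists y, forall n, ext_pow f I n (y - dn n x).
  move=> x; apply: hcomp => n; apply: (solution_mod_unique hT hm (hdn n)).
  by apply: sub_solution_mod (hdn n.+1) => y; exact: ext_powS.
have sol n : solution_mod f alpha T a (ext_pow f I n) dd.
  exact: solution_mod_perturb (ext_pow_ideal f I n) (hdn n) (fun x => hdd x n).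
have [dd_der ddT] := solution_of_solution_mod_ext_pow hsep sol.
exists dd; split=> // dd' dd'_der dd'T x.
apply/eqP; rewrite -subr_eq0; apply/eqP; apply: hsep => n.
apply: (solution_mod_unique hT hm (sol n)).
exact: solution_mod_of_solution (ext_pow_ideal f I n) dd'_der dd'T.
Qed.
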